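(* Let $(X,d)$ be an Atsuji space and $f:X\to X$ a closed mapping. If there exists $x_0\in X$ such that $\liminf_{n\to\infty} d(f^n(x_0),f^{n+1}(x_0))=0$, then $f$ has a fixed point.
   Context: A metric space $(X,d)$ is an Atsuji space if for each open cover $\mathcal{U}$ of $X$ there exists $\varepsilon>0$ such that for every $x\in X$ the open ball $B_d(x,\varepsilon)$ is contained in some element of $\mathcal{U}$. A mapping is closed if it maps closed sets to closed sets (continuity is not assumed). $f^n$ denotes the $n$-fold iterate of $f$. *)

From Stdlib Require Import Reals.
From Coquelicot Require Import Coquelicot.
Open Scope R_scope.

Section MetricDefs.
Variable M : Metric_Space.
Local Notation X := (Base M).
Local Notation d := (dist M).

Definition open_ball (x : X) (eps : R) : X -> Prop := fun y => d x y < eps.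

Definition m_open (U : X -> Prop) : Prop :=
  forall x, U x -> exists eps, eps > 0 /\ forall y, open_ball x eps y -> U y.

Definition m_closed (F : X -> Prop) : Prop := m_open (fun x => ~ F x).

Definition open_cover (C : (X -> Prop) -> Prop) : Prop :=
  (forall U, C U -> m_open U) /\ (forall x, exists U, C U /\ U x).

Definition Atsuji : Prop :=
  forall C : (X -> Prop) -> Prop, open_cover C ->
    exists eps, eps > 0 /\
      forall x, exists U, C U /\ forall y, open_ball x eps y -> U y.

Definition image (f : X -> X) (F : X -> Prop) : X -> Prop :=
  fun y => exists x, F x /\ f x = y.

(* closed mapping (continuity not assumed) *)
Definition closed_map (f : X -> X) : Prop :=
  forall F, m_closed F -> m_closed (image f F).
End MetricDefs.

(* Suppose f has no fixed point and let x_n = f^n(x0).  Consecutive points of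
   the orbit are distinct and come arbitrarily close, so the orbit is not
   eventually periodic, hence injective.  If no point p had pairs
   (x_n, x_(n+1)) in every ball around it, the balls free of such pairs would
   form an open cover of X, and a close enough pair would fit into a single
   ball of radius a Lebesgue number; so some p is such a cluster point.  Pick
   pairs (x_n_k, x_(n_k+1)) converging to p with x_(n_k+1) <> p.  The set
   F = {p} u {x_n_k} is closed, hence so is f(F); since f(F) contains the
   points x_(n_k+1) -> p, it contains p, which forces f p = p. *)
From Stdlib Require Import Reals.
From Coquelicot Require Import Coquelicot.
From Stdlib Require Import Classical ClassicalEpsilon Lia Lra.
Open Scope R_scope.

Lemma finite_pos_lower_bound (P : nat -> Prop) (u : nat -> R) (N : nat) :
  (forall i, (i < N)%nat -> P i -> 0 < u i) ->
  exists e, 0 < e /\ forall i, (i < N)%nat -> P i -> e <= u i.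
Proof.
  induction N as [|N IH]; intros Hu.
  - exists 1; split; [lra | intros; lia].
  - destruct IH as [e [He Hle]]; [intros i Hi; apply Hu; lia |].
    destruct (classic (P N)) as [HPN | HPN].
    + exists (Rmin e (u N)); split.
      { apply Rmin_glb_lt; [exact He | apply Hu; auto]. }
      intros i Hi HPi.
      destruct (Nat.eq_dec i N) as [-> | HiN]; [apply Rmin_r |].
      eapply Rle_trans; [apply Rmin_l | apply Hle; auto; lia].
    + exists e; split; [exact He |].
      intros i Hi HPi.
      destruct (Nat.eq_dec i N) as [-> | HiN]; [contradiction | apply Hle; auto; lia].
Qed.

Lemma LimInf_seq_0_small (u : nat -> R) :
  LimInf_seq u = Finite 0 -> forall eps, 0 < eps -> exists n, u n < eps.
Proof.
  intros Hlim eps Heps.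
  destruct (ex_LimInf_seq u) as [l Hl].
  rewrite (is_LimInf_seq_unique _ _ Hl) in Hlim; subst l.
  destruct (Hl (mkposreal eps Heps)) as [Hfreq _].
  destruct (Hfreq O) as [n [_ Hn]].
  exists n; simpl in Hn; lra.
Qed.

Section MetricSpace.
Variable M : Metric_Space.
Local Notation X := (Base M).
Local Notation d := (dist M).

Definition converges_to (a : nat -> X) (p : X) : Prop :=
  forall eps, 0 < eps -> exists N, forall k, (N <= k)%nat -> d p (a k) < eps.

Lemma dist_self (x : X) : d x x = 0.
Proof. apply (dist_refl M); reflexivity. Qed.

Lemma dist_pos_neq (x y : X) : x <> y -> 0 < d x y.
Proof.
  intros Hxy; destruct (dist_pos M x y) as [Hpos | H0]; [lra |].
  apply (dist_refl M) in H0; contradiction.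
Qed.

Lemma open_ball_center (x : X) (r : R) : 0 < r -> open_ball M x r x.
Proof. intros Hr; unfold open_ball; rewrite dist_self; exact Hr. Qed.

Lemma open_ball_open (x : X) (r : R) : m_open M (open_ball M x r).
Proof.
  intros y Hy; unfold open_ball in *.
  exists (r - d x y); split; [lra |].
  intros z Hz; pose proof (dist_tri M x z y); lra.
Qed.

Lemma m_closed_adherent (F : X -> Prop) (p : X) :
  m_closed M F -> (forall eps, 0 < eps -> exists y, F y /\ d p y < eps) -> F p.
Proof.
  intros HF Hadh; apply NNPP; intros Hp.
  destruct (HF p Hp) as [eps [Heps Hball]].
  destruct (Hadh eps Heps) as [y [Hy Hpy]].
  exact (Hball y Hpy Hy).
Qed.

Lemma converges_to_inv_succ (a : nat -> X) (p : X) :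
  (forall k, d p (a k) < / INR (S k)) -> converges_to a p.
Proof.
  intros Ha eps Heps.
  destruct (archimed_cor1 eps Heps) as [N [HN HN0]].
  exists N; intros k Hk.
  apply Rlt_trans with (/ INR (S k)); [apply Ha |].
  apply Rle_lt_trans with (/ INR N); [| exact HN].
  apply Rinv_le_contravar; [apply lt_0_INR; exact HN0 | apply le_INR; lia].
Qed.

Lemma m_closed_limit_range (a : nat -> X) (p : X) :
  converges_to a p -> m_closed M (fun y => y = p \/ exists k, y = a k).
Proof.
  intros Ha y Hy.
  assert (Hyp : 0 < d p y) by (apply dist_pos_neq; intros <-; apply Hy; left; reflexivity).
  destruct (Ha (d p y / 2)) as [N HN]; [lra |].
  destruct (finite_pos_lower_bound (fun k => a k <> y) (fun k => d y (a k)) N)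
    as [e [He Hsep]].
  { intros k _ Hk; apply dist_pos_neq, not_eq_sym, Hk. }
  exists (Rmin (d p y / 2) e); split; [apply Rmin_glb_lt; lra |].
  intros z Hz [-> | [k ->]]; unfold open_ball in Hz;
    pose proof (Rmin_l (d p y / 2) e); pose proof (Rmin_r (d p y / 2) e).
  - rewrite dist_sym in Hz; lra.
  - destruct (Nat.le_gt_cases N k) as [Hk | Hk].
    + pose proof (HN k Hk); pose proof (dist_tri M p y (a k)); rewrite (dist_sym M (a k) y) in *; lra.
    + assert (Hne : a k <> y) by (intros E; apply Hy; right; exists k; auto).
      pose proof (Hsep k Hk Hne); lra.
Qed.

Lemma closed_map_fixed_of_limit (f : X -> X) (a : nat -> X) (p : X) :
  closed_map M f -> converges_to a p -> converges_to (fun k => f (a k)) p ->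
  (forall k, f (a k) <> p) -> f p = p.
Proof.
  intros Hf Ha Hfa Hne.
  set (F := fun y => y = p \/ exists k, y = a k).
  assert (Hp : image M f F p).
  { apply m_closed_adherent; [exact (Hf F (m_closed_limit_range a p Ha)) |].
    intros eps Heps; destruct (Hfa eps Heps) as [N HN].
    exists (f (a N)); split; [exists (a N); split; [right; exists N |]; auto |].
    apply HN; lia. }
  destruct Hp as [z [[-> | [k ->]] Hz]]; [exact Hz | exfalso; exact (Hne k Hz)].
Qed.

Lemma closed_map_fixed_of_approx (f : X -> X) (p : X) :
  closed_map M f ->
  (forall r, 0 < r -> exists y, d p y < r /\ d p (f y) < r /\ f y <> p) ->
  f p = p.
Proof.
  intros Hf Happrox.
  assert (Hk : forall k, exists y, d p y < / INR (S k) /\ d p (f y) < / INR (S k)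
                                   /\ f y <> p).
  { intros k; apply Happrox, Rinv_0_lt_compat, lt_0_INR; lia. }
  destruct (choice _ Hk) as [a Ha].
  apply (closed_map_fixed_of_limit f a p Hf).
  - apply converges_to_inv_succ; intros k; apply Ha.
  - apply converges_to_inv_succ; intros k; apply Ha.
  - intros k; apply Ha.
Qed.

Section Sequence.
Variable a : nat -> X.

Lemma atsuji_cluster_of_small_steps :
  Atsuji M -> (forall eps, 0 < eps -> exists n, d (a n) (a (S n)) < eps) ->
  exists p, forall r, 0 < r -> exists n, d p (a n) < r /\ d p (a (S n)) < r.
Proof.
  intros HA Hsmall; apply NNPP; intros Hno.
  set (C := fun U : X -> Prop => exists p r, 0 < r /\
              (forall n, ~ (d p (a n) < r /\ d p (a (S n)) < r)) /\
              U = open_ball M p r).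
  assert (HC : open_cover M C).
  { split.
    - intros U [p [r [_ [_ ->]]]]; apply open_ball_open.
    - intros p.
      destruct (not_all_ex_not _ _ (not_ex_all_not _ _ Hno p)) as [r Hr].
      apply imply_to_and in Hr as [Hr Hfree].
      exists (open_ball M p r); split; [| apply open_ball_center; exact Hr].
      exists p, r; repeat split; auto.
      intros n Hn; apply Hfree; exists n; exact Hn. }
  destruct (HA C HC) as [eps [Heps Hleb]].
  destruct (Hsmall eps Heps) as [n Hn].
  destruct (Hleb (a n)) as [U [[p [r [_ [Hfree ->]]]] Hsub]].
  apply (Hfree n); split.
  - apply Hsub, open_ball_center; exact Heps.
  - apply Hsub; exact Hn.
Qed.

(* A pair (a n, a (S n)) of distinct points cannot lie in arbitrarily small
   balls around p, so the finitely many n < N can be excluded. *)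
Lemma cluster_pairs_frequently (p : X) :
  (forall n, a n <> a (S n)) ->
  (forall r, 0 < r -> exists n, d p (a n) < r /\ d p (a (S n)) < r) ->
  forall r N, 0 < r -> exists n, (N <= n)%nat /\ d p (a n) < r /\ d p (a (S n)) < r.
Proof.
  intros Hneq Hclu r N Hr.
  destruct (finite_pos_lower_bound (fun _ => True)
              (fun n => Rmax (d p (a n)) (d p (a (S n)))) N) as [e [He Hle]].
  { intros n _ _.
    destruct (Req_dec (d p (a n)) 0) as [H0 | H0].
    - apply (dist_refl M) in H0.
      apply Rlt_le_trans with (d p (a (S n))); [| apply Rmax_r].
      apply dist_pos_neq; rewrite H0; apply Hneq.
    - apply Rlt_le_trans with (d p (a n)); [| apply Rmax_l].
      destruct (dist_pos M p (a n)); lra. }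
  destruct (Hclu (Rmin r e)) as [n [H1 H2]]; [apply Rmin_glb_lt; lra |].
  pose proof (Rmin_l r e); pose proof (Rmin_r r e).
  exists n; repeat split; try lra.
  destruct (Nat.le_gt_cases N n) as [Hn | Hn]; [exact Hn | exfalso].
  pose proof (Hle n Hn I); unfold Rmax in *; destruct Rle_dec; lra.
Qed.

End Sequence.

Section Orbit.
Variable f : X -> X.
Variable x0 : X.
Local Notation x n := (Nat.iter n f x0).

Lemma iter_periodic_range (i j : nat) :
  (i < j)%nat -> x i = x j -> forall n, exists m, (m < j)%nat /\ x n = x m.
Proof.
  intros Hij Heq n; induction n as [n IH] using (well_founded_induction Wf_nat.lt_wf).
  destruct (Nat.lt_ge_cases n j) as [Hn | Hn]; [exists n; auto |].
  destruct (IH (n - j + i)%nat) as [m [Hm Em]]; [lia |].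
  exists m; split; [exact Hm |].
  rewrite <- Em, Nat.iter_add, Heq, <- Nat.iter_add; f_equal; lia.
Qed.

(* An eventually periodic orbit has only finitely many steps, all positive. *)
Lemma iter_injective_of_small_steps :
  (forall n, x n <> x (S n)) ->
  (forall eps, 0 < eps -> exists n, d (x n) (x (S n)) < eps) ->
  forall i j, (i < j)%nat -> x i <> x j.
Proof.
  intros Hneq Hsmall i j Hij Heq.
  destruct (finite_pos_lower_bound (fun _ => True) (fun m => d (x m) (x (S m))) j)
    as [e [He Hle]].
  { intros m _ _; apply dist_pos_neq, Hneq. }
  destruct (Hsmall e He) as [n Hn].
  destruct (iter_periodic_range i j Hij Heq n) as [m [Hm Em]].
  rewrite Nat.iter_succ, Em, <- Nat.iter_succ in Hn.
  pose proof (Hle m Hm I); lra.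
Qed.

Lemma iter_cluster_avoiding (p : X) :
  (forall i j, (i < j)%nat -> x i <> x j) ->
  (forall r N, 0 < r -> exists n, (N <= n)%nat /\ d p (x n) < r /\ d p (x (S n)) < r) ->
  forall r, 0 < r -> exists n, d p (x n) < r /\ d p (x (S n)) < r /\ x (S n) <> p.
Proof.
  intros Hinj Hfreq r Hr.
  destruct (classic (exists m, x m = p)) as [[m Hm] | Hnot].
  - destruct (Hfreq r m Hr) as [n [Hn [H1 H2]]].
    exists n; repeat split; auto.
    rewrite <- Hm; apply not_eq_sym, Hinj; lia.
  - destruct (Hfreq r O Hr) as [n [_ [H1 H2]]].
    exists n; repeat split; auto.
    intros E; apply Hnot; exists (S n); exact E.
Qed.

End Orbit.

End MetricSpace.

Theorem corollary7 (M : Metric_Space) (f : Base M -> Base M) :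
  Atsuji M -> closed_map M f ->
  (exists x0 : Base M,
      LimInf_seq (fun n => dist M (Nat.iter n f x0) (Nat.iter (S n) f x0))
      = Finite 0) ->
  exists x : Base M, f x = x.
Proof.
  intros HA Hf [x0 Hlim].
  apply NNPP; intros Hnofix.
  set (x := fun n => Nat.iter n f x0).
  assert (Hneq : forall n, x n <> x (S n)).
  { intros n E; apply Hnofix; exists (x n); symmetry; exact E. }
  pose proof (LimInf_seq_0_small _ Hlim) as Hsmall.
  pose proof (iter_injective_of_small_steps M f x0 Hneq Hsmall) as Hinj.
  destruct (atsuji_cluster_of_small_steps M x HA Hsmall) as [p Hclu].
  pose proof (cluster_pairs_frequently M x p Hneq Hclu) as Hfreq.
  apply Hnofix; exists p.
  apply (closed_map_fixed_of_approx M f p Hf).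
  intros r Hr.
  destruct (iter_cluster_avoiding M f x0 p Hinj Hfreq r Hr) as [n Hn].
  exists (x n); exact Hn.
Qed.
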